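(* Let $M$ be a principally Goldie*-lifting right $R$-module with $\mathrm{Rad}(M)\ll M$. Then $M/\mathrm{Rad}(M)$ is principally semisimple.
   Context: $R$ is an associative ring with identity; modules are unital right $R$-modules; $\mathrm{Rad}(M)$ is the Jacobson radical of $M$. $K\ll M$ means $K$ is small in $M$. A module is principally semisimple if every cyclic submodule is a direct summand. For submodules $X,Y$ of $M$, $X\,\beta^*\,Y$ means $(X+Y)/X\ll M/X$ and $(X+Y)/Y\ll M/Y$. $M$ is principally Goldie*-lifting if for every cyclic submodule $X$ of $M$ there is a direct summand $D$ of $M$ with $X\,\beta^*\,D$. *)

From HB Require Import structures.
From mathcomp Require Import all_boot all_order all_algebra.
Set Implicit Arguments. Unset Strict Implicit. Unset Printing Implicit Defensive.
Import GRing.Theory.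
Local Open Scope ring_scope.

(* A unital right R-module is a (unital) left module over the converse ring
   R^c: the right action  m * r  is  (r : R^c) *: m. *)

Section ModuleTheory.
Context {R : nzRingType} {M : lmodType R^c}.

Definition rmul (m : M) (r : R) : M := (r : R^c) *: m.

Definition is_submod (X : M -> Prop) : Prop :=
  [/\ X 0, (forall x y, X x -> X y -> X (x + y))
    & (forall x (r : R), X x -> X (rmul x r))].

Definition subm_le (X Y : M -> Prop) : Prop := forall m, X m -> Y m.

Definition subm_add (X Y : M -> Prop) : M -> Prop :=
  fun m => exists x y, [/\ X x, Y y & m = x + y].

Definition cyclic_sub (x : M) : M -> Prop := fun m => exists r : R, m = rmul x r.

Definition subm_full (L : M -> Prop) : Prop := forall m, L m.

Definition maximal_sub (L : M -> Prop) : Prop :=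
  [/\ is_submod L, ~ subm_full L &
      forall N, is_submod N -> subm_le L N -> subm_le N L \/ subm_full N].

(* Jacobson radical: intersection of all maximal submodules (= M if none) *)
Definition Rad : M -> Prop := fun m => forall L, maximal_sub L -> L m.

Definition small (K : M -> Prop) : Prop :=
  forall L, is_submod L -> subm_full (subm_add K L) -> subm_full L.

Definition direct_summand (D : M -> Prop) : Prop :=
  is_submod D /\ exists D', [/\ is_submod D', subm_full (subm_add D D')
                              & forall m, D m -> D' m -> m = 0].

(* Notions in the factor module M/X, expressed through the correspondence
   theorem: submodules of M/X are exactly L/X with X <= L <= M.
   For X <= K:  K/X << M/X. *)
Definition small_quot (X K : M -> Prop) : Prop :=
  forall L, is_submod L -> subm_le X L ->
    subm_full (subm_add K L) -> subm_full L.

Definition beta_star (X Y : M -> Prop) : Prop :=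
  small_quot X (subm_add X Y) /\ small_quot Y (subm_add X Y).

Definition principally_Goldie_star_lifting : Prop :=
  forall x : M, exists D, direct_summand D /\ beta_star (cyclic_sub x) D.

(* For X <= K: K/X is a direct summand of M/X, i.e. there is L/X with
   K/X + L/X = M/X and K/X \cap L/X = 0 (i.e. K \cap L <= X). *)
Definition direct_summand_quot (X K : M -> Prop) : Prop :=
  exists L, [/\ is_submod L, subm_le X L, subm_full (subm_add K L)
              & forall m, K m -> L m -> X m].

(* M/X is principally semisimple: every cyclic submodule (x+X)R = (xR+X)/X
   of M/X is a direct summand of M/X. *)
Definition principally_semisimple_quot (X : M -> Prop) : Prop :=
  forall x : M, direct_summand_quot X (subm_add (cyclic_sub x) X).

End ModuleTheory.

From HB Require Import structures.
From mathcomp Require Import all_boot all_order all_algebra.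
From Stdlib Require Import Classical.
Set Implicit Arguments. Unset Strict Implicit.
Import GRing.Theory.
Local Open Scope ring_scope.

(* Let M = D (+) E be the decomposition with x R beta* D.  For every maximal
   submodule L, the submodule D + (L cap E) is M or maximal, so it contains
   Rad(M); together with (xR + D)/D << M/D it also contains xR.  Reading off
   E-components, the projection onto E maps both Rad(M) and xR into Rad(M).
   Since (xR + D)/xR << M/xR forces xR + E = M, the submodule (E + Rad M)/Rad M
   is a complement of (xR + Rad M)/Rad M. *)

Section SubmoduleLattice.
Variables (R : nzRingType) (M : lmodType R^c).
Implicit Types (X Y D E L N K : M -> Prop) (x y a b : M).

Lemma submod0 X : is_submod X -> X 0.
Proof. by case. Qed.

Lemma submodD X x y : is_submod X -> X x -> X y -> X (x + y).
Proof. by case=> _ addX _; apply: addX. Qed.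

Lemma submodN X x : is_submod X -> X x -> X (- x).
Proof. by case=> _ _ mulX Xx; have := mulX x (-1) Xx; rewrite /rmul scaleN1r. Qed.

Lemma submodB X x y : is_submod X -> X x -> X y -> X (x - y).
Proof. by move=> subX Xx Xy; apply: submodD (submodN subX Xy). Qed.

Lemma submod_add X Y : is_submod X -> is_submod Y -> is_submod (subm_add X Y).
Proof.
move=> subX subY; split.
- by exists 0, 0; split; rewrite ?addr0 //; apply: submod0.
- move=> _ _ [x1 [y1 [X1 Y1 ->]]] [x2 [y2 [X2 Y2 ->]]].
  by exists (x1 + x2), (y1 + y2); split; [apply: submodD..|rewrite addrACA].
- move=> _ r [x [y [Xx Yy ->]]]; exists (rmul x r), (rmul y r).
  by split; [case: subX => _ _; apply|case: subY => _ _; apply|rewrite /rmul scalerDr].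
Qed.

Lemma submodI X Y : is_submod X -> is_submod Y -> is_submod (fun m => X m /\ Y m).
Proof.
move=> subX subY; split.
- by split; apply: submod0.
- by move=> x y [? ?] [? ?]; split; apply: submodD.
- by move=> x r [? ?]; split; [case: subX => _ _; apply|case: subY => _ _; apply].
Qed.

Lemma submod_cyclic x : is_submod (cyclic_sub x).
Proof.
split.
- by exists 0; rewrite /rmul scale0r.
- by move=> _ _ [r ->] [s ->]; exists (r + s); rewrite /rmul scalerDl.
- by move=> _ s [r ->]; exists (r * s); rewrite /rmul scalerA.
Qed.

Lemma submod_Rad : is_submod (@Rad R M).
Proof.
split.
- by move=> L [subL _ _]; apply: submod0.
- by move=> x y Rx Ry L maxL; case: (maxL) => subL _ _; apply: submodD (Rx L _) (Ry L _).
- by move=> x r Rx L maxL; case: (maxL) => [[_ _ mulL] _ _]; apply: mulL (Rx L _).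
Qed.

Lemma subm_addl X Y : is_submod Y -> subm_le X (subm_add X Y).
Proof. by move=> subY m Xm; exists m, 0; split; rewrite ?addr0 //; apply: submod0. Qed.

Lemma subm_addr X Y : is_submod X -> subm_le Y (subm_add X Y).
Proof. by move=> subX m Ym; exists 0, m; split; rewrite ?add0r //; apply: submod0. Qed.

Definition maximal_or_full N :=
  forall N', is_submod N' -> subm_le N N' -> subm_le N' N \/ subm_full N'.

Lemma Rad_le_maximal_or_full N :
  is_submod N -> maximal_or_full N -> subm_le (@Rad R M) N.
Proof.
move=> subN maxN m Rm; have [fullN|nfullN] := classic (subm_full N); first exact: fullN.
by apply: Rm; split.
Qed.

Lemma small_quot_le_maximal_or_full Y K N : is_submod K -> small_quot Y K ->
  is_submod N -> subm_le Y N -> maximal_or_full N -> subm_le K N.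
Proof.
move=> subK smallK subN leYN maxN.
have [leKN|fullKN] := maxN _ (submod_add subK subN) (subm_addr subK).
- by move=> m Km; apply/leKN/subm_addl.
- by move=> m _; apply: (smallK N subN leYN fullKN).
Qed.

Definition complementary D E :=
  [/\ is_submod D, is_submod E, subm_full (subm_add D E)
    & forall m, D m -> E m -> m = 0].

Lemma complementary_sym D E : complementary D E -> complementary E D.
Proof.
case=> subD subE fullDE capDE; split => // [m|m Em Dm]; last exact: capDE.
by have [a [b [Da Eb ->]]] := fullDE m; exists b, a; rewrite addrC.
Qed.

Lemma complementary_uniq D E a b a' b' : complementary D E ->
  D a -> E b -> D a' -> E b' -> a + b = a' + b' -> a = a' /\ b = b'.
Proof.
case=> subD subE _ capDE Da Eb Da' Eb' eq_ab.
have eq_diff : a - a' = b' - b.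
  by rewrite -[a](addrK b) eq_ab addrAC [a' + b']addrC addrK.
have diff0 : a - a' = 0 by apply: capDE; [|rewrite eq_diff]; apply: submodB.
split; apply/eqP; first by rewrite -subr_eq0 diff0.
by rewrite eq_sym -subr_eq0 -eq_diff diff0.
Qed.

(* For N above D + (L cap E), maximality of L makes (N cap E) + L equal to
   L or to M; the first case gives N <= D + (L cap E), the second N = M. *)
Lemma maximal_or_full_add_cap D E L :
  complementary D E -> maximal_sub L -> maximal_or_full (subm_add D (fun m => L m /\ E m)).
Proof.
move=> [subD subE fullDE _] [subL _ maxL] N subN leN.
have leDN : subm_le D N by move=> m Dm; apply/leN/subm_addl => //; apply: submodI.
have subNE := submodI subN subE.
have [leNEL|fullNEL] := maxL _ (submod_add subNE subL) (subm_addr subNE).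
- left => m Nm; have [a [b [Da Eb em]]] := fullDE m.
  have eb : b = m - a by rewrite em addrAC subrr add0r.
  have Nb : N b by rewrite eb; apply: submodB Nm (leDN _ Da).
  exists a, b; split => //; split => //; apply: leNEL.
  by exists b, 0; split; rewrite ?addr0 //; apply: submod0.
- right => m; have [a [b [Da Eb ->]]] := fullDE m.
  apply: submodD (leDN _ Da) _ => //.
  have [c [l [[Nc Ec] Ll eb]]] := fullNEL b.
  have el : l = b - c by rewrite eb addrC addKr.
  have El : E l by rewrite el; apply: submodB.
  rewrite eb; apply: submodD Nc (leN _ _) => //.
  by exists 0, l; split; rewrite ?add0r //; apply: submod0.
Qed.

Lemma Rad_of_le_add_cap D E a b : complementary D E -> D a -> E b ->
  (forall L, maximal_sub L -> subm_add D (fun m => L m /\ E m) (a + b)) -> Rad b.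
Proof.
move=> DE Da Eb inN L maxL; have [a' [l [Da' [Ll El] eq_ab]]] := inN L maxL.
by have [_ ->] := complementary_uniq DE Da Eb Da' El eq_ab.
Qed.

Lemma Rad_component D E a b :
  complementary D E -> D a -> E b -> Rad (a + b) -> Rad b.
Proof.
move=> DE Da Eb Rab; apply: (Rad_of_le_add_cap DE Da Eb) => L maxL.
have [subD subE _ _] := DE; have [subL _ _] := maxL.
apply: Rad_le_maximal_or_full Rab; last exact: maximal_or_full_add_cap.
by apply: submod_add => //; apply: submodI.
Qed.

Lemma small_quot_component X D E a b : is_submod X -> complementary D E ->
  small_quot D (subm_add X D) -> D a -> E b -> X (a + b) -> Rad b.
Proof.
move=> subX DE smallXD Da Eb Xab; apply: (Rad_of_le_add_cap DE Da Eb) => L maxL.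
have [subD subE _ _] := DE; have [subL _ _] := maxL.
have subN : is_submod (subm_add D (fun m => L m /\ E m)).
  by apply: submod_add => //; apply: submodI.
have leDN : subm_le D (subm_add D (fun m => L m /\ E m)).
  by apply: subm_addl; apply: submodI.
apply: (small_quot_le_maximal_or_full _ smallXD subN leDN).
- exact: submod_add.
- exact: maximal_or_full_add_cap.
- exact: subm_addl.
Qed.

Lemma small_quot_add_full X D E : is_submod X -> is_submod E ->
  subm_full (subm_add D E) -> small_quot X (subm_add X D) -> subm_full (subm_add X E).
Proof.
move=> subX subE fullDE smallXD.
apply: (smallXD _ (submod_add subX subE) (subm_addl subE)) => m.
have [a [b [Da Eb ->]]] := fullDE m.
by exists a, b; split => //; [apply: subm_addr|apply: subm_addr].
Qed.

Lemma direct_summand_quot_Rad X D E : is_submod X -> complementary D E ->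
  subm_full (subm_add X E) ->
  (forall a b, D a -> E b -> X (a + b) -> Rad b) ->
  direct_summand_quot (@Rad R M) (subm_add X (@Rad R M)).
Proof.
move=> subX DE fullXE RadXE; have [subD subE fullDE _] := DE.
exists (subm_add E Rad); split.
- exact: submod_add submod_Rad.
- exact: subm_addr.
- move=> m; have [y [e [Xy Ee ->]]] := fullXE m.
  by exists y, e; split => //; apply: subm_addl submod_Rad _ _.
- move=> _ [y [r [Xy Rr ->]]] [e [r' [Ee Rr' eq_m]]].
  have [a [b [Da Eb eq_y]]] := fullDE y; rewrite eq_y in Xy eq_m *.
  have Rb : Rad b := RadXE a b Da Eb Xy.
  have Ra : Rad a.
    apply: Rad_component (complementary_sym DE) (submodB subE Eb Ee) Da _.
    have -> : b - e + a = r' - r.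
      by rewrite -(addKr e r') -eq_m addrA addrK [RHS]addrC addrAC [b + a]addrC.
    exact: submodB submod_Rad Rr' Rr.
  by apply: submodD submod_Rad (submodD submod_Rad Ra Rb) Rr.
Qed.

End SubmoduleLattice.

Theorem proposition3p14 (R : nzRingType) (M : lmodType R^c) :
  @principally_Goldie_star_lifting R M ->
  small (@Rad R M) ->
  principally_semisimple_quot (@Rad R M).
Proof.
move=> lifting _ x.
have [D [[subD [E [subE fullDE capDE]]] [smallX smallD]]] := lifting x.
have DE : complementary D E by [].
apply: (direct_summand_quot_Rad (submod_cyclic x) DE).
- exact: small_quot_add_full (submod_cyclic x) subE fullDE smallX.
- by move=> a b Da Eb; apply: small_quot_component (submod_cyclic x) DE smallD Da Eb.
Qed.
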